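(* Let $\mathcal F$ be a TBF algorithm and $G$ a Tanner graph. Let $V_{\mathrm e}\subset V(G)$ be the set of initially corrupt variable nodes and $I$ the induced subgraph of $G$ on $V_{\mathrm e}$. If there is no subset $V_{\mathrm s}\subset V(G)$ with $V_{\mathrm s}\supset V_{\mathrm e}$ such that the induced subgraph of $G$ on $V_{\mathrm s}$ is isomorphic to a graph in $\mathscr E_I^{\mathrm r}(\mathcal F)$, then $\mathcal F$ run on $G$ with initially corrupt set $V_{\mathrm e}$ converges (reaches zero syndrome) within at most $l^{\mathrm m}_{\mathcal F}$ iterations.
   Context: Tanner graphs: a Tanner graph $G$ is a bipartite graph with variable nodes $V(G)$, check nodes $C(G)$ and edges $E(G)$; every variable node has degree $d_{\mathrm v}$ (fixed). A subgraph $U$ of $G$ has $V(U)\subset V(G)$, $C(U)\subset C(G)$, $E(U)\subset E(G)$; $G$ also ''contains'' any graph isomorphic to a subgraph. The induced subgraph on $V_{\mathrm s}\subset V(G)$ has variable nodes $V_{\mathrm s}$, all check nodes adjacent to $V_{\mathrm s}$, and all edges of $G$ incident to $V_{\mathrm s}$. Decoding setting: the all-zero codeword is sent over the binary symmetric channel; $\mathbf y$ is the received vector; $\hat{\mathbf x}^l$ is the decision vector after iteration $l$ (with $\hat{\mathbf x}^0=\mathbf y$), and $\mathbf s^l=\hat{\mathbf x}^lH^{\mathrm T}$ its syndrome ($H$ the biadjacency matrix). A variable node $v$ is initially corrupt if $y_v=1$. TBF algorithm $\mathcal F=(f,l^{\mathrm m}_{\mathcal F},\Delta_{\mathrm v},\Delta_{\mathrm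 c})$: variable node states lie in $\mathcal A_{\mathrm v}=\{0_{\mathrm s},0_{\mathrm w},1_{\mathrm w},1_{\mathrm s}\}$ (state $a_{\mathrm s}$ or $a_{\mathrm w}$ means decision bit $a$), check node states in $\mathcal A_{\mathrm c}=\{0_{\mathrm p},0_{\mathrm n},1_{\mathrm p},1_{\mathrm n}\}$. Initialization: $w^0_v=\Delta_{\mathrm v}(y_v)$ with $\Delta_{\mathrm v}(0)\in\{0_{\mathrm s},0_{\mathrm w}\}$, $\Delta_{\mathrm v}(1)\in\{1_{\mathrm s},1_{\mathrm w}\}$; $z^1_c=\Delta_{\mathrm c}(s^0_c)$ with $\Delta_{\mathrm c}(0)\in\{0_{\mathrm p},0_{\mathrm n}\}$, $\Delta_{\mathrm c}(1)\in\{1_{\mathrm p},1_{\mathrm n}\}$. For $l=1,2,\dots$, while the syndrome is nonzero and $l<l^{\mathrm m}_{\mathcal F}$: every variable node updates $w^l_v=f(w^{l-1}_v,\chi^l_{0_{\mathrm p}}(v),\chi^l_{0_{\mathrm n}}(v),\chi^l_{1_{\mathrm p}}(v),\chi^l_{1_{\mathrm n}}(v))$, where $\chi^l_a(v)$ is the number of neighboring check nodes $c$ with $z^l_c=a$; then every check node updates $z^{l+1}_c=\Phi(s^{l-1}_c,s^l_c)$ with $\Phi(0,0)=0_{\mathrm p},\Phi(0,1)=1_{\mathrm n},\Phi(1,0)=0_{\mathrm n},\Phi(1,1)=1_{\mathrm p}$. Here $f:\mathcal A_{\mathrm v}\times\Xi_{d_{\mathrm v}}\to\mathcal A_{\mathrm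 v}$, where $\Xi_{d_{\mathrm v}}$ is the set of 4-tuples of nonnegative integers summing to $d_{\mathrm v}$; $f$ is symmetric with respect to $0$ and $1$ and every variable-node state is reachable from every other. Failure: for a TBF algorithm $\mathcal F$, a Tanner graph $G$ and a set $V_{\mathrm e}$ of initially corrupt variable nodes with induced subgraph $I$, ''$\mathcal F$ fails on the subgraph $I$ of $G$'' means $\mathcal F$ run on $G$ with initially corrupt set $V_{\mathrm e}$ does not converge (does not reach zero syndrome) within $l^{\mathrm m}_{\mathcal F}$ iterations. Trapping sets: for a Tanner graph $I$, $\mathscr E_I(\mathcal F)$ is the set of Tanner graphs $S$ containing a subgraph $J$ isomorphic to $I$ such that $\mathcal F$ fails on $J$ of $S$. $S_1\in\mathscr E_I(\mathcal F)$, with $\mathcal F$ failing on its subgraph $J_1$, belongs to $\mathscr E_I^{\mathrm r}(\mathcal F)$ if there is no $S_2\in\mathscr E_I(\mathcal F)$ with a subgraph $J_2$ such that $\mathcal F$ fails on $J_2$ of $S_2$ and there is an isomorphism between $S_2$ and a proper subgraph of $S_1$ mapping $V(J_2)$ into $V(J_1)$. Elements of $\mathscr E_I^{\mathrm r}(\mathcal F)$ are trapping sets of $\mathcal F$ with inducing set $I$; $\mathscr E_I^{\mathrm r}(\mathcal F)$ is the trapping set profile with inducing set $I$. *)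

From HB Require Import structures.
From mathcomp Require Import all_boot.
Set Implicit Arguments. Unset Strict Implicit. Unset Printing Implicit Defensive.

Record tanner := Tanner {
  nv : nat;
  nc : nat;
  adj : 'I_nv -> 'I_nc -> bool
}.

Definition tanner_reg (dv : nat) (G : tanner) : Prop :=
  forall v : 'I_(nv G), #|[set c | adj v c]| = dv.

(* induced subgraph on Vs: variable nodes Vs, check nodes adjacent to Vs,
   all edges of G incident to Vs *)
Definition nbhd (G : tanner) (Vs : {set 'I_(nv G)}) : {set 'I_(nc G)} :=
  [set c | [exists v in Vs, adj v c]].

Definition induced (G : tanner) (Vs : {set 'I_(nv G)}) : tanner :=
  {| nv := #|Vs|; nc := #|nbhd Vs|;
     adj := fun i j => adj (enum_val i) (enum_val j) |}.

Definition isomorphic (U W : tanner) : Prop :=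
  exists (fV : 'I_(nv U) -> 'I_(nv W)) (fC : 'I_(nc U) -> 'I_(nc W)),
    bijective fV /\ bijective fC /\ forall v c, adj v c = adj (fV v) (fC c).

Definition embedding (U G : tanner)
    (fV : 'I_(nv U) -> 'I_(nv G)) (fC : 'I_(nc U) -> 'I_(nc G)) : Prop :=
  injective fV /\ injective fC /\ forall v c, adj v c -> adj (fV v) (fC c).

Definition embedding_full (U G : tanner)
    (fV : 'I_(nv U) -> 'I_(nv G)) (fC : 'I_(nc U) -> 'I_(nc G)) : Prop :=
  (forall v, exists v', fV v' = v) /\ (forall c, exists c', fC c' = c) /\
  (forall v c, adj v c ->
     exists v' c', [/\ fV v' = v, fC c' = c & adj v' c']).

Inductive vstate := V0s | V0w | V1w | V1s.
Inductive cstate := C0p | C0n | C1p | C1n.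

Definition vstate_eqb (a b : vstate) : bool :=
  match a, b with
  | V0s, V0s | V0w, V0w | V1w, V1w | V1s, V1s => true | _, _ => false end.
Lemma vstate_eqP : Equality.axiom vstate_eqb.
Proof. by case; case; constructor. Qed.
HB.instance Definition _ := hasDecEq.Build vstate vstate_eqP.

Definition cstate_eqb (a b : cstate) : bool :=
  match a, b with
  | C0p, C0p | C0n, C0n | C1p, C1p | C1n, C1n => true | _, _ => false end.
Lemma cstate_eqP : Equality.axiom cstate_eqb.
Proof. by case; case; constructor. Qed.
HB.instance Definition _ := hasDecEq.Build cstate cstate_eqP.

Definition vbit (a : vstate) : bool :=
  match a with V0s | V0w => false | V1w | V1s => true end.

Definition vflip (a : vstate) : vstate :=
  match a with V0s => V1s | V0w => V1w | V1w => V0w | V1s => V0s end.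

Definition Phi (s_old s_new : bool) : cstate :=
  match s_old, s_new with
  | false, false => C0p | false, true => C1n
  | true, false => C0n | true, true => C1p end.

(* F = (f, l^m, Delta_v, Delta_c).  f a n0p n0n n1p n1n is f(a, chi);
   only its values on tuples summing to d_v are ever used / constrained. *)
Record tbf := TBF {
  tbf_f : vstate -> nat -> nat -> nat -> nat -> vstate;
  tbf_lm : nat;
  tbf_dV : bool -> vstate;
  tbf_dC : bool -> cstate
}.

Definition in_Xi (dv n0p n0n n1p n1n : nat) : Prop := n0p + n0n + n1p + n1n = dv.

Definition tbf_step (dv : nat) (F : tbf) (a b : vstate) : Prop :=
  exists n0p n0n n1p n1n, in_Xi dv n0p n0n n1p n1n /\ tbf_f F a n0p n0n n1p n1n = b.

Inductive reach (dv : nat) (F : tbf) : vstate -> vstate -> Prop :=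
  | reach_one a b : tbf_step dv F a b -> reach dv F a b
  | reach_cons a b c : tbf_step dv F a b -> reach dv F b c -> reach dv F a c.

Definition tbf_valid (dv : nat) (F : tbf) : Prop :=
  [/\ tbf_dV F false \in [:: V0s; V0w],
      tbf_dV F true \in [:: V1s; V1w],
      tbf_dC F false \in [:: C0p; C0n]
    & tbf_dC F true \in [:: C1p; C1n]] /\
  (forall a n0p n0n n1p n1n, in_Xi dv n0p n0n n1p n1n ->
     tbf_f F (vflip a) n1p n1n n0p n0n = vflip (tbf_f F a n0p n0n n1p n1n)) /\
  (forall a b, a <> b -> reach dv F a b).

Definition syndrome (G : tanner) (x : 'I_(nv G) -> bool) (c : 'I_(nc G)) : bool :=
  odd #|[set v | adj v c & x v]|.

Definition chi (G : tanner) (z : 'I_(nc G) -> cstate) (v : 'I_(nv G)) (a : cstate) : nat :=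
  #|[set c | adj v c & z c == a]|.

(* run F G Ve l = (w^l, z^{l+1}, s^l) : variable states after iteration l,
   check states used in iteration l+1, syndrome after iteration l.
   (Computed without stopping; stopping does not change whether a zero
   syndrome is reached.) *)
Fixpoint run (F : tbf) (G : tanner) (Ve : {set 'I_(nv G)}) (l : nat) :
    ('I_(nv G) -> vstate) * ('I_(nc G) -> cstate) * ('I_(nc G) -> bool) :=
  match l with
  | 0 =>
      let w := fun v => tbf_dV F (v \in Ve) in
      let s := syndrome (fun v => vbit (w v)) in
      (w, (fun c => tbf_dC F (s c)), s)
  | l'.+1 =>
      let '(w, z, s) := run F Ve l' in
      let w' := fun v => tbf_f F (w v) (chi z v C0p) (chi z v C0n)
                                        (chi z v C1p) (chi z v C1n) in
      let s' := syndrome (fun v => vbit (w' v)) in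
      (w', (fun c => Phi (s c) (s' c)), s')
  end.

Definition syn_at (F : tbf) (G : tanner) (Ve : {set 'I_(nv G)}) (l : nat) :=
  (run F Ve l).2.

(* F run on G with initially corrupt set Ve reaches zero syndrome: the loop
   "while s != 0 and l < l^m" executes iterations 1 .. l^m - 1 at most. *)
Definition converges (F : tbf) (G : tanner) (Ve : {set 'I_(nv G)}) : Prop :=
  exists l, l <= (tbf_lm F).-1 /\ forall c, syn_at F Ve l c = false.

Definition fails (F : tbf) (G : tanner) (Ve : {set 'I_(nv G)}) : Prop :=
  ~ converges F Ve.

Definition imV (U G : tanner) (fV : 'I_(nv U) -> 'I_(nv G)) : {set 'I_(nv G)} :=
  [set fV v | v : 'I_(nv U)].

Definition in_E (dv : nat) (F : tbf) (I S : tanner)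
    (gV : 'I_(nv I) -> 'I_(nv S)) (gC : 'I_(nc I) -> 'I_(nc S)) : Prop :=
  tanner_reg dv S /\ embedding gV gC /\ fails F (imV gV).

Definition trapping_set (dv : nat) (F : tbf) (I S : tanner) : Prop :=
  exists gV gC, @in_E dv F I S gV gC /\
    ~ exists (S2 : tanner) (gV2 : 'I_(nv I) -> 'I_(nv S2)) (gC2 : 'I_(nc I) -> 'I_(nc S2))
             (fV : 'I_(nv S2) -> 'I_(nv S)) (fC : 'I_(nc S2) -> 'I_(nc S)),
        [/\ in_E dv F gV2 gC2,
            embedding fV fC,
            ~ embedding_full fV fC
          & forall v, fV (gV2 v) \in imV gV].

From HB Require Import structures.
From mathcomp Require Import all_boot zify.
From Stdlib Require Import Classical.
Set Implicit Arguments. Unset Strict Implicit. Unset Printing Implicit Defensive.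

(* Suppose F fails on Ve.  Consider the candidates: graphs S in E_I(F)
   (dv-regular, containing a copy J of I on which F fails) together with an
   embedding of S into G mapping J into Ve.  G itself is one, so there is a
   candidate of minimal size (nodes plus edges).  A minimal candidate is a
   trapping set: a smaller member of E_I(F) properly inside S would again be
   a candidate.  It has no isolated check node, since deleting one changes
   nothing in the decoding (the decoder is invariant under relabelling and
   under removal of isolated checks).  Finally, an embedding between
   dv-regular graphs reaches every neighbour of an image variable, so when S
   has no isolated check its image in G is exactly the induced subgraph on
   the image of its variable nodes; this set contains Ve by counting. *)

Lemma card_preimage_inj (T U : finType) (f : T -> U) (P : pred U) :
  injective f -> (forall u, P u -> exists t, f t = u) ->
  #|[set t | P (f t)]| = #|[set u | P u]|.
Proof.
move=> injf onto; rewrite -(card_imset _ injf); apply: eq_card => u.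
rewrite inE; apply/imsetP/idP => [[t] | Pu]; first by rewrite inE => Pt ->.
by have [t ftu] := onto u Pu; exists t; rewrite ?inE ftu.
Qed.

Definition wnext (F : tbf) (G : tanner) (z : 'I_(nc G) -> cstate)
    (w : 'I_(nv G) -> vstate) : 'I_(nv G) -> vstate :=
  fun v => tbf_f F (w v) (chi z v C0p) (chi z v C0n) (chi z v C1p) (chi z v C1n).

Lemma run_syndrome F G (Ve : {set 'I_(nv G)}) l :
  (run F Ve l).2 = syndrome (fun v => vbit ((run F Ve l).1.1 v)).
Proof. by case: l => [|l] //=; case: (run F Ve l) => [[w z] s]. Qed.

(* The decoder only sees the graph up to relabelling of the nodes and up to
   isolated check nodes: if B arises from A by a bijective relabelling fV of
   the variable nodes and an injective relabelling fC of the check nodes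
   missing only isolated checks, the runs on A and B agree. *)
Section DecoderTransfer.
Variables (F : tbf) (A B : tanner) (VeA : {set 'I_(nv A)}) (VeB : {set 'I_(nv B)}).
Variables (fV : 'I_(nv B) -> 'I_(nv A)) (fC : 'I_(nc B) -> 'I_(nc A)).
Hypotheses (bijV : bijective fV) (injC : injective fC)
  (adjE : forall v c, adj v c = adj (fV v) (fC c))
  (nonisolated_in_image : forall v c', adj v c' -> exists c, fC c = c')
  (corruptE : forall v, (v \in VeB) = (fV v \in VeA)).

Lemma syndrome_transfer xB xA : (forall v, xB v = xA (fV v)) ->
  forall c, syndrome xB c = syndrome xA (fC c).
Proof.
move=> xE c; rewrite /syndrome; congr odd.
transitivity #|[set v | (fun v' => adj v' (fC c) && xA v') (fV v)]|.
  by apply: eq_card => v; rewrite !inE adjE xE.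
apply: card_preimage_inj; first exact: bij_inj.
by case: bijV => g _ gK u _; exists (g u); rewrite gK.
Qed.

Lemma chi_transfer zB zA : (forall c, zB c = zA (fC c)) ->
  forall v a, chi zB v a = chi zA (fV v) a.
Proof.
move=> zE v a; rewrite /chi.
transitivity #|[set c | (fun c' => adj (fV v) c' && (zA c' == a)) (fC c)]|.
  by apply: eq_card => c; rewrite !inE adjE zE.
by apply: card_preimage_inj => // u /andP [/nonisolated_in_image].
Qed.

Lemma run_transfer l :
  [/\ forall v, (run F VeB l).1.1 v = (run F VeA l).1.1 (fV v),
      forall c, (run F VeB l).1.2 c = (run F VeA l).1.2 (fC c)
    & forall c, (run F VeB l).2 c = (run F VeA l).2 (fC c)].
Proof.
elim: l => [|l IH].
  have wE v : tbf_dV F (v \in VeB) = tbf_dV F (fV v \in VeA) by rewrite corruptE.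
  have sE := syndrome_transfer (xA := fun v => vbit (tbf_dV F (v \in VeA)))
    (fun v => congr1 vbit (wE v)).
  by split => //= c; rewrite sE.
rewrite /=; case: (run F VeB l) IH => [[wB zB] sB].
case: (run F VeA l) => [[wA zA] sA] /= [wE zE sE].
have w'E v : wnext F zB wB v = wnext F zA wA (fV v).
  by rewrite /wnext wE !(chi_transfer zE).
have s'E := syndrome_transfer (xA := fun v => vbit (wnext F zA wA v))
  (fun v => congr1 vbit (w'E v)).
by split => //= c; rewrite /wnext in w'E s'E; rewrite s'E sE.
Qed.

(* Checks outside the image of fC are isolated, so their syndrome is 0. *)
Lemma converges_transfer : converges F VeB -> converges F VeA.
Proof.
move=> [l [le_l zeroB]]; exists l; split=> // c.
have [[c' <-] | notim] := classic (exists c', fC c' = c).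
  by have [_ _ sE] := run_transfer l; rewrite /syn_at -sE; apply: zeroB.
rewrite /syn_at run_syndrome /syndrome.
suff -> : [set v | adj v c & vbit ((run F VeA l).1.1 v)] = set0 by rewrite cards0.
apply/setP => v; rewrite !inE; case: (boolP (adj v c)) => // /nonisolated_in_image.
by move=> /notim.
Qed.

End DecoderTransfer.

Definition isolated (S : tanner) (c0 : 'I_(nc S)) : Prop := forall v, ~~ adj v c0.

Definition other_checks (S : tanner) (c0 : 'I_(nc S)) : {set 'I_(nc S)} :=
  [set c | c != c0].

Definition drop_check (S : tanner) (c0 : 'I_(nc S)) : tanner :=
  {| nv := nv S; nc := #|other_checks c0|;
     adj := fun v i => adj v (enum_val i) |}.

Section DropIsolatedCheck.
Variables (S : tanner) (c0 : 'I_(nc S)).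
Hypothesis c0_isolated : isolated c0.

Let keepC : 'I_(nc (drop_check c0)) -> 'I_(nc S) := @enum_val _ (other_checks c0).
Let keepV : 'I_(nv (drop_check c0)) -> 'I_(nv S) := fun v => v.

Lemma drop_check_onto v c : adj v c -> exists i, keepC i = c.
Proof.
move=> vc; have c_kept : c \in other_checks c0.
  by rewrite inE; apply: contraTneq vc => ->; apply: c0_isolated.
by exists (enum_rank_in c_kept c); rewrite /keepC enum_rankK_in.
Qed.

Lemma drop_check_embedding : embedding keepV keepC.
Proof. by split=> //; split=> //; apply: enum_val_inj. Qed.

Lemma drop_check_not_full : ~ embedding_full keepV keepC.
Proof.
case=> _ [ontoC _]; have [i c0E] := ontoC c0.
by have := enum_valP i; rewrite /keepC in c0E; rewrite c0E inE eqxx.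
Qed.

Lemma drop_check_regular dv : tanner_reg dv S -> tanner_reg dv (drop_check c0).
Proof.
move=> regS v; rewrite -(regS v).
transitivity #|[set i | (fun c => @adj S v c) (keepC i)]|.
  by apply: eq_card => i; rewrite !inE.
by apply: card_preimage_inj => [|c]; [apply: enum_val_inj | apply: drop_check_onto].
Qed.

Lemma drop_check_fails F (Ve : {set 'I_(nv S)}) :
  fails F Ve -> fails F (Ve : {set 'I_(nv (drop_check c0))}).
Proof.
move=> failS convD; apply: failS.
apply: (converges_transfer (fV := keepV) (fC := keepC)) convD => //.
- by exists keepV.
- exact: enum_val_inj.
- exact: drop_check_onto.
Qed.

End DropIsolatedCheck.

Definition reducible (dv : nat) (F : tbf) (I S : tanner)
    (gV : 'I_(nv I) -> 'I_(nv S)) : Prop :=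
  exists (S2 : tanner) (gV2 : 'I_(nv I) -> 'I_(nv S2)) (gC2 : 'I_(nc I) -> 'I_(nc S2))
         (fV : 'I_(nv S2) -> 'I_(nv S)) (fC : 'I_(nc S2) -> 'I_(nc S)),
    [/\ in_E dv F gV2 gC2, embedding fV fC, ~ embedding_full fV fC
      & forall v, fV (gV2 v) \in imV gV].

(* In an irreducible member of E_I(F) every check node has a neighbour,
   provided I has this property: an isolated check could be deleted. *)
Lemma irreducible_no_isolated dv F (I S : tanner) gV gC :
  (forall c : 'I_(nc I), exists u, adj u c) ->
  @in_E dv F I S gV gC -> ~ reducible dv F gV ->
  forall c0 : 'I_(nc S), exists v, adj v c0.
Proof.
move=> checksI [regS [[injV [injC adjS]] failJ]] irred c0.
apply: NNPP => c0_free.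
have c0_isolated : isolated c0.
  by move=> v; apply/negP => vc0; apply: c0_free; exists v.
have gC_kept c : gC c \in other_checks c0.
  have [u uc] := checksI c; rewrite inE.
  by apply: contraTneq (adjS _ _ uc) => ->; apply: c0_isolated.
pose gC2 c : 'I_(nc (drop_check c0)) := enum_rank_in (gC_kept c) (gC c).
have gC2E c : enum_val (gC2 c) = gC c by rewrite enum_rankK_in.
apply: irred; exists (drop_check c0), gV, gC2, (fun v => v), enum_val; split.
- split; first exact: drop_check_regular.
  split; last exact: drop_check_fails.
  split=> //; split => [a b /(congr1 enum_val) | v c /adjS]; rewrite /= !gC2E //.
  exact: injC.
- exact: drop_check_embedding.
- exact: drop_check_not_full.
- by move=> v; apply: imset_f.
Qed.

Definition graph_size (S : tanner) : nat :=
  nv S + nc S + #|[set p : 'I_(nv S) * 'I_(nc S) | adj p.1 p.2]|.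

Lemma proper_embedding_size (U S : tanner) fV fC : @embedding U S fV fC ->
  ~ embedding_full fV fC -> graph_size U < graph_size S.
Proof.
move=> [injV [injC adjUS]] not_full; rewrite /graph_size.
set EU := [set p : 'I_(nv U) * 'I_(nc U) | adj p.1 p.2].
set ES := [set p : 'I_(nv S) * 'I_(nc S) | adj p.1 p.2].
pose g (p : 'I_(nv U) * 'I_(nc U)) := (fV p.1, fC p.2).
have injg : injective g by move=> [a b] [c d] [/injV -> /injC ->].
have gEU_sub : g @: EU \subset ES.
  by apply/subsetP => q /imsetP [p]; rewrite !inE => /adjUS ? ->.
have leV := leq_card _ injV; have leC := leq_card _ injC.
rewrite !card_ord in leV leC.
have leE : #|EU| <= #|ES| by rewrite -(card_imset _ injg); apply: subset_leq_card.
rewrite ltnNge; apply/negP => le_size; apply: not_full.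
have ontoV := inj_card_onto (f := fV) injV; have ontoC := inj_card_onto (f := fC) injC.
rewrite !card_ord in ontoV ontoC.
have gEU_ES : g @: EU = ES.
  by apply/eqP; rewrite eqEcard gEU_sub card_imset //; lia.
split; [move=> v | split; [move=> c | move=> v c vc]].
- by have /codomP [x ->] := ontoV ltac:(lia) v; exists x.
- by have /codomP [x ->] := ontoC ltac:(lia) c; exists x.
- have : (v, c) \in g @: EU by rewrite gEU_ES inE.
  by case/imsetP => [[a b]]; rewrite inE => ab [-> ->]; exists a, b.
Qed.

Lemma exists_minimal (T : Type) (P : T -> Prop) (m : T -> nat) :
  (exists x, P x) -> exists x, P x /\ forall y, P y -> ~ m y < m x.
Proof.
move=> [x Px]; move: {2}(m x) (erefl (m x)) => n mxE.
elim/ltn_ind: n x Px mxE => n IH x Px mxE.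
have [[y [Py lt_yx]] | no_smaller] := classic (exists y, P y /\ m y < m x).
  by apply: (IH (m y) _ y Py); rewrite // -mxE.
by exists x; split=> // y Py lt_yx; apply: no_smaller; exists y.
Qed.

Record candidate (I G : tanner) := Candidate {
  cand_S : tanner;
  cand_gV : 'I_(nv I) -> 'I_(nv cand_S);
  cand_gC : 'I_(nc I) -> 'I_(nc cand_S);
  cand_hV : 'I_(nv cand_S) -> 'I_(nv G);
  cand_hC : 'I_(nc cand_S) -> 'I_(nc G) }.
Arguments cand_S {I G}. Arguments cand_gV {I G}. Arguments cand_gC {I G}.
Arguments cand_hV {I G}. Arguments cand_hC {I G}.

Definition admissible (dv : nat) (F : tbf) (I G : tanner) (Ve : {set 'I_(nv G)})
    (x : candidate I G) : Prop :=
  [/\ in_E dv F (cand_gV x) (cand_gC x), embedding (cand_hV x) (cand_hC x)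
    & forall v, cand_hV x (cand_gV x v) \in Ve].

(* A smallest admissible candidate is irreducible: a reduction would give a
   smaller admissible candidate by composing embeddings. *)
Lemma minimal_irreducible dv F I G Ve (x : candidate I G) :
  admissible dv F Ve x ->
  (forall y : candidate I G, admissible dv F Ve y ->
     ~ graph_size (cand_S y) < graph_size (cand_S x)) ->
  ~ reducible dv F (cand_gV x).
Proof.
case: x => S gV gC hV hC /= [_ [injV [injC adjSG]] JVe] minx.
move=> [S2 [gV2 [gC2 [fV [fC [inE2 embS2 not_full J2J]]]]]].
apply: (minx (Candidate gV2 gC2 (hV \o fV) (hC \o fC))); last first.
  exact: proper_embedding_size embS2 not_full.
have [injfV [injfC adjS2]] := embS2.
split=> //=.
  by split; [exact: inj_comp | split; [exact: inj_comp |]] => v c /adjS2 /adjSG.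
by move=> v; have /imsetP [u _ ->] := J2J v; apply: JVe.
Qed.

Lemma enum_image_bij (T U : finType) (h : T -> U) (A : {set U}) :
  injective h -> A = [set h x | x : T] ->
  exists g : 'I_#|A| -> T, bijective g /\ forall i, h (g i) = enum_val i.
Proof.
move=> injh {A}->; set A := [set h x | x : T].
have hA x : h x \in A by rewrite imset_f.
have preim (i : 'I_#|A|) : exists x, h x == enum_val i.
  by have := enum_valP i; case/imsetP => x _ ->; exists x.
pose g i := xchoose (preim i).
have gE i : h (g i) = enum_val i by apply/eqP/(xchooseP (preim i)).
exists g; split=> //; exists (fun x => enum_rank_in (hA x) (h x)).
  by move=> i; apply: enum_val_inj; rewrite enum_rankK_in ?hA ?gE.
by move=> x; apply: injh; rewrite gE enum_rankK_in ?hA.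
Qed.

Section RegularEmbedding.
Variables (dv : nat) (S G : tanner).
Variables (hV : 'I_(nv S) -> 'I_(nv G)) (hC : 'I_(nc S) -> 'I_(nc G)).
Hypotheses (regS : tanner_reg dv S) (regG : tanner_reg dv G)
  (embSG : embedding hV hC).

(* All neighbours of an image node are images: degrees are equal. *)
Lemma regular_embedding_onto_nbhd v c' :
  adj (hV v) c' -> exists2 c, hC c = c' & adj v c.
Proof.
have [_ [injC adjSG]] := embSG.
have nbhdE : hC @: [set c | adj v c] = [set c | adj (hV v) c].
  apply/eqP; rewrite eqEcard card_imset // regS regG leqnn andbT.
  by apply/subsetP => y /imsetP [c]; rewrite !inE => /adjSG ? ->.
move=> vc'; have : c' \in hC @: [set c | adj v c] by rewrite nbhdE inE.
by case/imsetP => c; rewrite inE => vc ->; exists c.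
Qed.

Lemma regular_embedding_adjE v c : adj (hV v) (hC c) = adj v c.
Proof.
have [_ [injC adjSG]] := embSG.
apply/idP/idP => [/regular_embedding_onto_nbhd [c' /injC -> //] | /adjSG //].
Qed.

Hypothesis checks_nonisolated : forall c : 'I_(nc S), exists v, adj v c.

Lemma nbhd_image : nbhd (imV hV) = [set hC c | c : 'I_(nc S)].
Proof.
apply/setP => x; rewrite inE; apply/existsP/imsetP => [[y /andP []] | [c _ ->]].
  case/imsetP => v _ -> /regular_embedding_onto_nbhd [c <- _].
  by exists c.
have [v vc] := checks_nonisolated c.
by exists (hV v); rewrite imset_f ?regular_embedding_adjE.
Qed.

Lemma image_induced_isomorphic : isomorphic (induced (imV hV)) S.
Proof.
have [injV [injC _]] := embSG.
have [fV [bijfV fVE]] := enum_image_bij injV (erefl (imV hV)).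
have [fC [bijfC fCE]] := enum_image_bij injC nbhd_image.
exists fV, fC; split=> //; split=> // i j /=.
by rewrite -fVE -fCE regular_embedding_adjE.
Qed.

End RegularEmbedding.

Lemma induced_checks_nonisolated (G : tanner) (Vs : {set 'I_(nv G)})
    (c : 'I_(nc (induced Vs))) : exists u : 'I_(nv (induced Vs)), adj u c.
Proof.
have := enum_valP c; rewrite inE => /existsP [v /andP [vVs vc]].
by exists (enum_rank_in vVs v); rewrite /= enum_rankK_in.
Qed.

Lemma failing_graph_admissible dv F (G : tanner) (Ve : {set 'I_(nv G)}) :
  tanner_reg dv G -> fails F Ve ->
  admissible dv F Ve (Candidate (I := induced Ve) (G := G)
                        enum_val enum_val (fun v => v) (fun c => c)).
Proof.
move=> regG failVe.
have enumE : imV (enum_val : 'I_(nv (induced Ve)) -> _) = Ve.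
  apply/setP => x; apply/imsetP/idP => [[i _ ->] | xVe]; first exact: enum_valP.
  by exists (enum_rank_in xVe x); rewrite ?enum_rankK_in.
split=> //=; last exact: enum_valP.
  split=> //; split; last by rewrite enumE.
  by split; [exact: enum_val_inj | split; [exact: enum_val_inj |]].
by split=> //; split.
Qed.

(* An injection from I into Ve hits all of Ve, so the image of an admissible
   candidate contains the corrupt set. *)
Lemma admissible_covers dv F (G : tanner) (Ve : {set 'I_(nv G)})
    (x : candidate (induced Ve) G) :
  admissible dv F Ve x -> Ve \subset imV (cand_hV x).
Proof.
case: x => S gV gC hV hC /= [[_ [[injgV _] _]] [injhV _] JVe].
pose k u := hV (gV u).
have injk : injective k by move=> a b /injhV /injgV.
have imkE : [set k u | u : 'I_(nv (induced Ve))] = Ve.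
  apply/eqP; rewrite eqEcard card_imset // card_ord leqnn andbT.
  by apply/subsetP => y /imsetP [u _ ->]; apply: JVe.
by rewrite -imkE; apply/subsetP => y /imsetP [u _ ->]; apply: imset_f.
Qed.

Theorem proposition2 (dv : nat) (F : tbf) (HF : tbf_valid dv F)
    (G : tanner) (HG : tanner_reg dv G) (Ve : {set 'I_(nv G)}) :
  ~ (exists Vs : {set 'I_(nv G)}, Ve \subset Vs /\
       exists S : tanner, trapping_set dv F (induced Ve) S /\
                          isomorphic (induced Vs) S) ->
  converges F Ve.
Proof.
move=> no_trapping_set; apply: NNPP => failVe.
have [x [adm_x min_x]] :=
  exists_minimal (fun y => graph_size (cand_S y))
    (ex_intro _ _ (failing_graph_admissible HG failVe)).
have irred := minimal_irreducible adm_x min_x.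
have covers := admissible_covers adm_x.
case: x {min_x} adm_x irred covers => S gV gC hV hC /= [inE_S embSG _] irred covers.
have nonisolated :=
  irreducible_no_isolated (@induced_checks_nonisolated G Ve) inE_S irred.
apply: no_trapping_set; exists (imV hV); split=> //.
exists S; split; first by exists gV, gC.
exact: image_induced_isomorphic inE_S.1 HG embSG nonisolated.
Qed.
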